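(* Let $(C;\le_0,\le_1)$ be a compatible 2-preorder and let $\mathcal C_i$ ($i=0,1$) be the family of $\le_i$-up subsets of $C$. Then any two disjoint sets $A,B\subseteq C$ whose complements belong to $\mathcal C_1$ can be separated by a set $D\in\mathcal C_1$ whose complement is also in $\mathcal C_1$ (i.e., $A\subseteq D\subseteq C\setminus B$). If moreover $C$ is finite, then any two such disjoint sets can be separated by a set in the Boolean closure of $\mathcal C_0$ (the 2-base $(\mathcal C_0,\mathcal C_1)$ is interpolable).
   Context: A 2-preorder is a set $C$ with preorders $\le_0,\le_1$ such that $x\le_1y$ implies $x\equiv_0y$. It is compatible if $a\equiv_0b$ implies that there is $c$ with $c\le_1a$ and $c\le_1b$. A set $U$ is $\le_i$-up if $a\in U$ and $a\le_i c$ imply $c\in U$. *)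

(* the carrier C is a type T, subsets are predicates T -> Prop. *)
From Stdlib Require Import List.
Set Implicit Arguments.

Section Defs.
Variable T : Type.

Definition is_preorder (R : T -> T -> Prop) : Prop :=
  (forall x, R x x) /\ (forall x y z, R x y -> R y z -> R x z).

Definition equiv0 (le0 : T -> T -> Prop) (x y : T) : Prop := le0 x y /\ le0 y x.

Definition two_preorder (le0 le1 : T -> T -> Prop) : Prop :=
  is_preorder le0 /\ is_preorder le1 /\
  (forall x y, le1 x y -> equiv0 le0 x y).

Definition compatible (le0 le1 : T -> T -> Prop) : Prop :=
  forall a b, equiv0 le0 a b -> exists c, le1 c a /\ le1 c b.

Definition up_set (R : T -> T -> Prop) (U : T -> Prop) : Prop :=
  forall a c, U a -> R a c -> U c.

Definition compl (U : T -> Prop) : T -> Prop := fun x => ~ U x.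

Definition subset (U V : T -> Prop) : Prop := forall x, U x -> V x.

Definition disjoint (U V : T -> Prop) : Prop := forall x, U x -> V x -> False.

Definition separates (D A B : T -> Prop) : Prop :=
  subset A D /\ subset D (compl B).

Inductive bool_closure (F : (T -> Prop) -> Prop) : (T -> Prop) -> Prop :=
  | bc_base U : F U -> bool_closure F U
  | bc_compl U : bool_closure F U -> bool_closure F (compl U)
  | bc_union U V : bool_closure F U -> bool_closure F V ->
      bool_closure F (fun x => U x \/ V x)
  | bc_inter U V : bool_closure F U -> bool_closure F V ->
      bool_closure F (fun x => U x /\ V x)
  | bc_ext U V : bool_closure F U -> (forall x, U x <-> V x) ->
      bool_closure F V.

Definition finite_type : Prop := exists l : list T, forall x : T, In x l.

End Defs.

(* The separating set is the ≡_0-saturation D of A.  Since x ≤_1 y implies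
   x ≡_0 y, both D and its complement are ≤_1-up.  D misses B: if a ∈ A and
   a ≡_0 b ∈ B, compatibility gives c ≤_1 a, b, and c lies in A and in B
   because A and B are ≤_1-down.  When C is finite, D is a finite union of
   ≡_0-classes, and the class of a is the ≤_0-up set of a minus the ≤_0-up
   set of the elements strictly above a. *)
From Stdlib Require Import List.
From Stdlib Require Import Classical.

Definition saturation {T : Type} (le0 : T -> T -> Prop) (A : T -> Prop) : T -> Prop :=
  fun x => exists a, A a /\ equiv0 le0 a x.

Section Saturation.
Context {T : Type} {le0 : T -> T -> Prop}.
Hypothesis le0_preorder : is_preorder le0.

Lemma equiv0_trans {x y z : T} : equiv0 le0 x y -> equiv0 le0 y z -> equiv0 le0 x z.
Proof.
  destruct le0_preorder as [_ Htrans].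
  intros [Hxy Hyx] [Hyz Hzy]; split; eauto.
Qed.

Lemma equiv0_sym {x y : T} : equiv0 le0 x y -> equiv0 le0 y x.
Proof. intros [Hxy Hyx]; split; assumption. Qed.

Lemma subset_saturation (A : T -> Prop) : subset A (saturation le0 A).
Proof.
  destruct le0_preorder as [Hrefl _].
  intros x Ax; exists x; split; [assumption | split; apply Hrefl].
Qed.

Section FinerRelation.
Context {R : T -> T -> Prop}.
Hypothesis R_sub_equiv0 : forall x y, R x y -> equiv0 le0 x y.

Lemma up_set_saturation (A : T -> Prop) : up_set R (saturation le0 A).
Proof.
  intros x y [a [Aa Hax]] Hxy.
  exists a; split; [assumption | exact (equiv0_trans Hax (R_sub_equiv0 x y Hxy))].
Qed.

Lemma up_set_compl_saturation (A : T -> Prop) : up_set R (compl (saturation le0 A)).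
Proof.
  intros x y Hx Hxy [a [Aa Hay]]; apply Hx.
  exists a; split; [assumption | exact (equiv0_trans Hay (equiv0_sym (R_sub_equiv0 x y Hxy)))].
Qed.

End FinerRelation.

Lemma up_set_strictly_above (a : T) :
  up_set le0 (fun y => le0 a y /\ ~ le0 y a).
Proof.
  destruct le0_preorder as [_ Htrans].
  intros y z [Hay Hya] Hyz; split; eauto.
Qed.

Lemma bool_closure_equiv0_class (a : T) :
  bool_closure (up_set le0) (equiv0 le0 a).
Proof.
  destruct le0_preorder as [_ Htrans].
  apply bc_ext with (U := fun x => le0 a x /\ compl (fun y => le0 a y /\ ~ le0 y a) x).
  - apply bc_inter.
    + apply bc_base; intros x y; eauto.
    + apply bc_compl, bc_base, up_set_strictly_above.
  - intro x; unfold compl, equiv0; split.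
    + intros [Hax Hnot]; split; [assumption | apply NNPP; tauto].
    + tauto.
Qed.

End Saturation.

Lemma down_closed_of_up_set_compl {T : Type} {R : T -> T -> Prop} {A : T -> Prop} {a c : T} :
  up_set R (compl A) -> R c a -> A a -> A c.
Proof.
  intros HA Hca Aa; apply NNPP; intro Ac; exact (HA c a Ac Hca Aa).
Qed.

Lemma separates_saturation {T : Type} {le0 le1 : T -> T -> Prop} {A B : T -> Prop} :
  is_preorder le0 -> compatible le0 le1 -> disjoint A B ->
  up_set le1 (compl A) -> up_set le1 (compl B) ->
  separates (saturation le0 A) A B.
Proof.
  intros Hpre Hcomp Hdisj HA HB; split.
  - exact (subset_saturation Hpre A).
  - intros x [a [Aa Hax]] Bx.
    destruct (Hcomp a x Hax) as [c [Hca Hcx]].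
    exact (Hdisj c (down_closed_of_up_set_compl HA Hca Aa)
                   (down_closed_of_up_set_compl HB Hcx Bx)).
Qed.

Section BoolClosure.
Context {T : Type} {F : (T -> Prop) -> Prop} {U0 : T -> Prop}.
Hypothesis F_U0 : F U0.

Lemma bool_closure_empty : bool_closure F (fun _ => False).
Proof.
  apply bc_ext with (U := fun x => U0 x /\ compl U0 x).
  - apply bc_inter; [apply bc_base | apply bc_compl, bc_base]; exact F_U0.
  - intro x; unfold compl; tauto.
Qed.

Lemma bool_closure_and_prop (P : Prop) (V : T -> Prop) :
  bool_closure F V -> bool_closure F (fun x => P /\ V x).
Proof.
  intro HV; destruct (classic P) as [HP | HnP].
  - apply bc_ext with (1 := HV); tauto.
  - apply bc_ext with (1 := bool_closure_empty); tauto.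
Qed.

Lemma bool_closure_list_union (V : T -> T -> Prop) (l : list T) :
  (forall a, bool_closure F (V a)) ->
  bool_closure F (fun x => exists a, In a l /\ V a x).
Proof.
  intro HV; induction l as [| a l IH].
  - apply bc_ext with (1 := bool_closure_empty).
    intro x; split; [tauto | intros [b [[] _]]].
  - apply bc_ext with (U := fun x => V a x \/ exists b, In b l /\ V b x).
    + apply bc_union; [apply HV | exact IH].
    + intro x; simpl; split.
      * intros [H | [b [Hb H]]]; eauto.
      * intros [b [[<- | Hb] H]]; eauto.
Qed.

End BoolClosure.

Lemma bool_closure_saturation {T : Type} {le0 : T -> T -> Prop} (A : T -> Prop) :
  is_preorder le0 -> finite_type T ->
  bool_closure (up_set le0) (saturation le0 A).
Proof.
  intros Hpre [l Hl].
  assert (Htop : up_set le0 (fun _ => True)) by (intros ? ? ? ?; exact I).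
  apply bc_ext with (U := fun x => exists a, In a l /\ (A a /\ equiv0 le0 a x)).
  - apply (bool_closure_list_union Htop); intro a.
    apply (bool_closure_and_prop Htop), (bool_closure_equiv0_class Hpre).
  - intro x; split.
    + intros [a [_ H]]; exists a; exact H.
    + intros [a H]; exists a; split; [apply Hl | exact H].
Qed.

Theorem lemma3p5 (T : Type) (le0 le1 : T -> T -> Prop) :
  two_preorder le0 le1 -> compatible le0 le1 ->
  (forall A B : T -> Prop,
     disjoint A B -> up_set le1 (compl A) -> up_set le1 (compl B) ->
     exists D : T -> Prop,
       up_set le1 D /\ up_set le1 (compl D) /\ separates D A B) /\
  (finite_type T ->
   forall A B : T -> Prop,
     disjoint A B -> up_set le1 (compl A) -> up_set le1 (compl B) ->
     exists D : T -> Prop,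
       bool_closure (up_set le0) D /\ separates D A B).
Proof.
  intros [Hpre0 [_ Hle1_equiv0]] Hcomp; split.
  - intros A B Hdisj HA HB; exists (saturation le0 A); split; [| split].
    + exact (up_set_saturation Hpre0 Hle1_equiv0 A).
    + exact (up_set_compl_saturation Hpre0 Hle1_equiv0 A).
    + exact (separates_saturation Hpre0 Hcomp Hdisj HA HB).
  - intros Hfin A B Hdisj HA HB; exists (saturation le0 A); split.
    + exact (bool_closure_saturation A Hpre0 Hfin).
    + exact (separates_saturation Hpre0 Hcomp Hdisj HA HB).
Qed.
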